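(* Let $T$ be a tree on $n\ge2$ vertices, $k\ge2$ even, and $M$ the order-$k$ Steiner distance hypermatrix of $T$. For all $\mathbf{c}_1,\ldots,\mathbf{c}_k\in\mathcal{H}_n$, $$M(\mathbf{c}_1,\ldots,\mathbf{c}_k)=(-2\,\mathbb{I}^k_{n-1})(P_T\mathbf{c}_1,\ldots,P_T\mathbf{c}_k)=-2\sum_{e\in E(T)}\prod_{j=1}^k (\mathbf{a}'^T_e\mathbf{c}_j).$$
   Context: $T$ is a tree with vertex set $\{1,\dots,n\}$ and edge set $E(T)$. For $U\subseteq V(T)$, the Steiner distance $S(U)$ is the minimum number of edges of a connected subgraph of $T$ whose vertex set contains $U$. The order-$k$ Steiner distance hypermatrix $M$ has entries $M_{(i_1,\dots,i_k)}=S(\{i_1,\dots,i_k\})$, and for any order-$k$ hypermatrix $H$ of dimension $m$, $H(\mathbf{x}_1,\dots,\mathbf{x}_k)=\sum_{\mathbf{i}\in [m]^k}H_{\mathbf{i}}\prod_{j=1}^k x_{j i_j}$. For an edge $e$, $A(e)$, $B(e)$ are the vertex sets of the two components of $T-e$, $\mathbf{a}_e$ is the indicator vector of $A(e)$, $\mathbb{J}$ is the all-ones vector, $\mathbf{a}'_e=\mathbf{a}_e-\frac{|A(e)|}{n}\mathbb{J}$, and $P_T$ is the $(n-1)\times n$ matrix with rows indexed by $E(T)$ whose row $e$ is $\mathbf{a}'^T_e$. $\mathcal{H}_n=\{\mathbf{c}\in\mathbb{R}^n:\mathbf{c}^T\mathbb{J}=0\}$. $\mathbb{I}^k_{m}$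 is the order-$k$, dimension-$m$ identity hypermatrix: its $(i_1,\dots,i_k)$ entry is $1$ if $i_1=\dots=i_k$ and $0$ otherwise. *)

From HB Require Import structures.
From mathcomp Require Import all_boot all_order all_algebra.
Set Implicit Arguments. Unset Strict Implicit. Unset Printing Implicit Defensive.
Import Order.TTheory GRing.Theory Num.Theory.
Local Open Scope ring_scope.

(* Graphs on vertex set 'I_n = {0,...,n-1}; an edge is a 2-element vertex set. *)
Section Defs.
Variable n : nat.

Definition adj (E : {set {set 'I_n}}) : rel 'I_n :=
  fun x y => (x != y) && ([set x; y] \in E).

Definition is_tree (E : {set {set 'I_n}}) : Prop :=
  [/\ forall e, e \in E -> #|e| = 2%N,
      forall x y : 'I_n, connect (adj E) x y
    & #|E| = n.-1].

Definition steiner_ok (E : {set {set 'I_n}}) (U W : {set 'I_n})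
    (F : {set {set 'I_n}}) : bool :=
  [&& F \subset E, U \subset W, [forall f in F, f \subset W]
    & [forall x in W, forall y in W, connect (adj F) x y]].

(* Steiner distance S(U): minimum number of edges of such a subgraph
   (the default #|E| is attained by T itself when T is a tree). *)
Definition steiner (E : {set {set 'I_n}}) (U : {set 'I_n}) : nat :=
  \big[minn/#|E|]_(W : {set 'I_n})
    \big[minn/#|E|]_(F : {set {set 'I_n}} | steiner_ok E U W F) #|F|.

Definition compA (E : {set {set 'I_n}}) (e : {set 'I_n}) : {set 'I_n} :=
  match [pick u in e] with
  | Some u => [set x | connect (adj (E :\ e)) u x]
  | None => set0
  end.

Variable R : fieldType.

Definition avec (E : {set {set 'I_n}}) (e : {set 'I_n}) : 'cV[R]_n :=
  \col_i (i \in compA E e)%:R.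

Definition avec' (E : {set {set 'I_n}}) (e : {set 'I_n}) : 'cV[R]_n :=
  avec E e - (#|compA E e|%:R / n%:R) *: const_mx 1.

Definition PT (E : {set {set 'I_n}}) : 'M[R]_(#|E|, n) :=
  \matrix_(r < #|E|, i < n) avec' E (enum_val r) i 0.

Definition Hn (c : 'cV[R]_n) : Prop := \sum_(i < n) c i 0 = 0.

End Defs.

Definition hform (R : fieldType) (k m : nat)
    (H : {ffun 'I_k -> 'I_m} -> R) (x : 'I_k -> 'cV[R]_m) : R :=
  \sum_(i : {ffun 'I_k -> 'I_m}) H i * \prod_(j < k) x j (i j) 0.

Definition steiner_hyper (R : fieldType) (n k : nat) (E : {set {set 'I_n}})
    : {ffun 'I_k -> 'I_n} -> R :=
  fun i => (steiner E [set i j | j : 'I_k])%:R.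

Definition id_hyper (R : fieldType) (k m : nat) : {ffun 'I_k -> 'I_m} -> R :=
  fun i => ([forall j, forall j', i j == i j'])%:R.

From Pilot Require Import Defs.
From HB Require Import structures.
From mathcomp Require Import all_boot all_order all_algebra.
From mathcomp Require Import ring.
Import Order.TTheory GRing.Theory Num.Theory.
Set Implicit Arguments. Unset Strict Implicit. Unset Printing Implicit Defensive.

(* In a tree every edge e is a bridge, so the Steiner distance of U is the
   number of edges e whose cut (A(e), B(e)) splits U.  Hence
   S({i_1..i_k}) = sum_e (1 - prod_j [i_j in A(e)] - prod_j [i_j in B(e)]),
   and the Steiner form is a sum of rank-one forms.  On H_n the all-ones
   term vanishes, the indicator of B(e) acts as minus that of A(e), and for
   k even the two remaining products coincide. *)

Section TreeCuts.
Variable n : nat.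
Implicit Types (E F : {set {set 'I_n}}) (e f U W : {set 'I_n}) (x y z u v : 'I_n).

Lemma adj_sym F : symmetric (adj F).
Proof. by move=> x y; rewrite /adj eq_sym setUC. Qed.

Lemma connect_adj_sym F : connect_sym (adj F).
Proof. exact/sym_connect_sym/adj_sym. Qed.

Lemma connect_adj_subset F F' :
  F \subset F' -> subrel (connect (adj F)) (connect (adj F')).
Proof.
move=> sFF' x y; apply: connect_sub => u v /andP[uv uvF].
by apply: connect1; rewrite /adj uv (subsetP sFF').
Qed.

Lemma connect_adj0 x y : connect (adj set0) x y -> x = y.
Proof.
case/connectP=> [[|z p]] /=; first by move=> _ ->.
by rewrite /adj in_set0 andbF.
Qed.

Lemma adj_setD1 E e x y : adj E x y -> [set x; y] != e -> adj (E :\ e) x y.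
Proof. by case/andP=> xy xyE ne; rewrite /adj xy in_setD1 ne. Qed.

Lemma connect_setD1 F f x y : connect (adj F) x y ->
  connect (adj (F :\ f)) x y \/
  exists a b, [/\ f = [set a; b], connect (adj (F :\ f)) x a
                & connect (adj (F :\ f)) b y].
Proof.
case/connectP=> p; elim: p x => [|z p IH] x /=; first by move=> _ ->; left.
case/andP=> xz pz ey.
have [zy|[a [b [fab za by_]]]] := IH z pz ey;
  case: (eqVneq [set x; z] f) => [exz|ne].
- by right; exists x, z; split; rewrite ?exz ?connect0.
- by left; apply: connect_trans zy; apply/connect1/adj_setD1.
- have: x \in [set a; b] by rewrite -fab -exz set21.
  rewrite !inE => /orP[/eqP->|/eqP->]; last by left.
  by right; exists a, b.
- right; exists a, b; split=> //.
  by apply: connect_trans za; apply/connect1/adj_setD1.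
Qed.

(* Removing one edge merges at most two classes, so F has at least n - #|F|
   connected components; S is a set of representatives of distinct ones. *)
Lemma exists_disconnected_set F : exists S : {set 'I_n},
  (n <= #|S| + #|F|)%N /\ {in S &, forall x y, connect (adj F) x y -> x = y}.
Proof.
have [m] := ubnP #|F|; elim: m F => // m IH F.
have [->|[f fF]] := set_0Vmem F => Fm.
  exists setT; rewrite cards0 cardsT card_ord addn0.
  by split=> // x y _ _; apply: connect_adj0.
have cardF : #|F| = #|F :\ f|.+1 by rewrite (cardsD1 f F) fF.
have [|S [cardS discS]] := IH (F :\ f); first by rewrite -ltnS -cardF.
have [f0|[a af]] := set_0Vmem f.
  exists S; split; first by rewrite cardF addnS ltnW.
  move=> x y xS yS /(connect_setD1 f) [|[a [b [fab _ _]]]]; first exact: discS.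
  by move: (set21 a b); rewrite -fab f0 inE.
pose X := [set s | connect (adj (F :\ f)) s a].
exists (S :\: X); split.
  apply: (leq_trans cardS); rewrite cardF addnS -addSn leq_add2r.
  rewrite -(cardsID X S) addnC -addn1 leq_add2l.
  apply/card_le1_eqP => s t /setIP[sS sX] /setIP[tS tX].
  apply: discS => //; move: sX tX; rewrite !inE => sa ta.
  by apply: (connect_trans ta); rewrite connect_adj_sym.
move=> s t /setDP[sS sX] /setDP[tS tX] /(connect_setD1 f) [|[a' [b' [fab sa tb]]]].
  exact: discS.
move: af; rewrite fab !inE => /orP[/eqP aa|/eqP ab].
  by move: sX; rewrite inE aa sa.
by move: tX; rewrite inE ab connect_adj_sym tb.
Qed.

Lemma connected_card_edges F : (0 < n)%N ->
  (forall x y, connect (adj F) x y) -> (n <= #|F|.+1)%N.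
Proof.
move=> n0 connF; have [S [cardS discS]] := exists_disconnected_set F.
have S1 : (#|S| <= 1)%N by apply/card_le1_eqP => s t sS tS; apply: discS.
by apply: (leq_trans cardS); rewrite -add1n leq_add2r.
Qed.

Lemma tree_bridge E x z : is_tree E -> adj E x z ->
  ~~ connect (adj (E :\ [set x; z])) x z.
Proof.
case=> _ connE cardE xz; apply/negP => cxz; set e := [set x; z] in cxz.
have connE' u v : connect (adj (E :\ e)) u v.
  apply: (connect_sub _ (connE u v)) => p q pq.
  have [epq|ne] := eqVneq [set p; q] e; last exact/connect1/adj_setD1.
  have: p \in e /\ q \in e by rewrite -epq !inE !eqxx orbT.
  rewrite !inE => -[/orP[]/eqP-> /orP[]/eqP->] //; rewrite connect_adj_sym //.
have eE : e \in E by case/andP: xz.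
have n0 : (0 < n)%N := leq_ltn_trans (leq0n x) (ltn_ord x).
have := connected_card_edges n0 connE'.
move: cardE; rewrite (cardsD1 e E) eE add1n => ->.
by rewrite -{1}(prednK n0) ltnn.
Qed.

Lemma compA_connect E e x y : x \in Defs.compA E e ->
  (y \in Defs.compA E e) = connect (adj (E :\ e)) x y.
Proof.
rewrite /Defs.compA; case: pickP => [u ue|]; last by rewrite inE.
rewrite !inE => ux; apply/idP/idP => [uy|]; last exact: connect_trans.
by apply: connect_trans uy; rewrite connect_adj_sym.
Qed.

Lemma tree_edge_cut E x z u v : is_tree E -> adj E x z ->
  connect (adj (E :\ [set x; z])) u x -> connect (adj (E :\ [set x; z])) z v ->
  (u \in Defs.compA E [set x; z]) != (v \in Defs.compA E [set x; z]).
Proof.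
move=> treeE xz ux zv; have bridge := tree_bridge treeE xz.
rewrite /Defs.compA; case: pickP => [w|]; last by move/(_ x); rewrite !inE eqxx.
rewrite !inE => /orP[]/eqP->.
  rewrite connect_adj_sym ux; apply/negP => xv; case/negP: bridge.
  by apply: connect_trans xv _; rewrite connect_adj_sym.
rewrite zv eqb_id; apply/negP => zu; case/negP: bridge.
by rewrite connect_adj_sym; apply: connect_trans zu ux.
Qed.

Definition separates E U e :=
  [exists u in U, u \in Defs.compA E e] && [exists v in U, v \notin Defs.compA E e].

Definition cut_edges E U := [set e in E | separates E U e].

Lemma separatesP E U e u v : u \in U -> v \in U ->
  (u \in Defs.compA E e) != (v \in Defs.compA E e) -> separates E U e.
Proof.
move=> uU vU; case: (boolP (u \in _)) => uA /=; rewrite ?eqbF_neg ?negbK => vA.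
  by apply/andP; split; apply/existsP; [exists u | exists v]; rewrite ?uU ?vU.
by apply/andP; split; apply/existsP; [exists v | exists u]; rewrite ?uU ?vU.
Qed.

Lemma cut_edges_subset E U W F : steiner_ok E U W F -> cut_edges E U \subset F.
Proof.
case/and4P=> FE UW _ connW; apply/subsetP => e.
rewrite inE => /andP[eE /andP[/exists_inP[x xU xA] /exists_inP[y yU yA]]].
apply/negPn/negP => eF.
have FE' : F \subset E :\ e.
  apply/subsetP => f fF; rewrite in_setD1 (subsetP FE) // andbT.
  by apply: contraNneq eF => <-.
have /forall_inP/(_ y (subsetP UW y yU)) := forall_inP connW x (subsetP UW x xU).
by move/(connect_adj_subset FE'); rewrite -(compA_connect _ xA) (negbTE yA).
Qed.

Lemma bigmin_leq (I : finType) (P : pred I) (G : I -> nat) d j :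
  P j -> (\big[minn/d]_(i | P i) G i <= G j)%N.
Proof.
move=> Pj; rewrite -big_filter.
have : j \in [seq i <- index_enum I | P i] by rewrite mem_filter Pj mem_index_enum.
elim: [seq i <- index_enum I | P i] => //= a s IH.
rewrite inE big_cons => /orP[/eqP<-|/IH]; first exact: geq_minl.
exact: leq_trans (geq_minr _ _).
Qed.

Lemma steiner_le_ok E U W F : steiner_ok E U W F -> (steiner E U <= #|F|)%N.
Proof.
move=> ok; apply: (leq_trans (@bigmin_leq _ xpredT _ _ W isT)).
exact: bigmin_leq.
Qed.

Lemma card_cut_edges_le_steiner E U : (#|cut_edges E U| <= steiner E U)%N.
Proof.
have cutE : (#|cut_edges E U| <= #|E|)%N.
  by apply/subset_leq_card/subsetP => e; rewrite inE => /andP[].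
pose lb (v : nat) := (#|cut_edges E U| <= v)%N.
have lb_min (a b : nat) : lb a -> lb b -> lb (minn a b) by rewrite /lb leq_min => -> ->.
apply: (big_ind lb) => // W _; apply: (big_ind lb) => // F ok.
exact/subset_leq_card/(cut_edges_subset ok).
Qed.

Lemma path_connect_setD1 E e t z p : path (adj E) z p ->
  t \notin z :: p -> t \in e -> connect (adj (E :\ e)) z (last z p).
Proof.
elim: p z => [|z' p IH] z /=; first by move=> *; apply: connect0.
case/andP=> zz' pz'; rewrite in_cons negb_or => /andP[tz tp] te.
apply: connect_trans (IH z' pz' tp te); apply/connect1/adj_setD1 => //.
apply/eqP => ee; move: te tp; rewrite -ee !inE => /orP[]/eqP tz'.
  by rewrite tz' eqxx in tz.
by rewrite tz' eqxx.
Qed.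

(* The last hypothesis is the induction invariant: x0 reaches x without
   using an edge through a later vertex, as along the prefix of a simple path. *)
Lemma tree_path_cut_edges E U x0 y : is_tree E -> x0 \in U -> y \in U ->
  forall p x, uniq (x :: p) -> path (adj E) x p -> last x p = y ->
  (forall t e, t \in p -> t \in e -> connect (adj (E :\ e)) x0 x) ->
  path (adj (cut_edges E U)) x p.
Proof.
move=> treeE x0U yU; elim=> [|z p IH] x //= /andP[xzp uzp] /andP[xz pz] py x0x.
have [xz' eE] := andP xz.
apply/andP; split.
  rewrite /adj xz' inE eE; apply: (separatesP x0U yU).
  apply: tree_edge_cut treeE xz _ _; first by apply: (x0x z); rewrite !inE eqxx ?orbT.
  by rewrite -py; apply: path_connect_setD1 pz xzp _; rewrite !inE eqxx.
apply: IH => // t e tp te; apply: connect_trans (x0x t e _ te) _.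
  by rewrite inE tp orbT.
apply/connect1/adj_setD1 => //; apply/eqP => ee.
move: te; rewrite -ee !inE => /orP[]/eqP tE.
  by move: xzp; rewrite -tE inE tp orbT.
by move: uzp; rewrite -tE /= tp.
Qed.

Lemma connect_restrict_component F x0 p x :
  let W := [set z | connect (adj F) x0 z] in
  connect (adj F) x0 x -> path (adj F) x p ->
  connect (adj [set f in F | f \subset W]) x (last x p).
Proof.
move=> W; elim: p x => [|z p IH] x /=; first by move=> *; apply: connect0.
move=> x0x /andP[xz pz].
have x0z : connect (adj F) x0 z by apply: connect_trans x0x (connect1 _).
apply: connect_trans (IH z x0z pz); apply: connect1.
case/andP: xz => xz xzF; rewrite /adj xz inE xzF /=.
by apply/subsetP => w; rewrite !inE => /orP[]/eqP->.
Qed.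

Lemma steiner_tree E U x0 : is_tree E -> x0 \in U ->
  steiner E U = #|cut_edges E U|.
Proof.
move=> treeE x0U; apply/eqP; rewrite eqn_leq card_cut_edges_le_steiner andbT.
set F0 := cut_edges E U.
have x0F0 y : y \in U -> connect (adj F0) x0 y.
  have [_ connE _] := treeE; have /connectP[p pE ->] := connE x0 y.
  case: (shortenP pE) => p' pE' up' _ yU; apply/connectP; exists p' => //.
  by apply: (tree_path_cut_edges treeE x0U yU up' pE') => // *; apply: connect0.
set W := [set z | connect (adj F0) x0 z].
set F := [set f in F0 | f \subset W].
have x0F z : connect (adj F0) x0 z -> connect (adj F) x0 z.
  by case/connectP=> p pF0 ->; apply: connect_restrict_component pF0.
have ok : steiner_ok E U W F.
  apply/and4P; split.
  - by apply/subsetP => f; rewrite !inE => /andP[/andP[]].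
  - by apply/subsetP => y yU; rewrite inE x0F0.
  - by apply/forall_inP => f; rewrite inE => /andP[].
  - apply/forall_inP => x; rewrite inE => /x0F x0x.
    apply/forall_inP => y; rewrite inE => /x0F x0y.
    by apply: connect_trans x0y; rewrite connect_adj_sym.
apply: (leq_trans (steiner_le_ok ok)).
by apply/subset_leq_card/subsetP => f; rewrite inE => /andP[].
Qed.

End TreeCuts.

Local Open Scope ring_scope.

Section Hyperforms.
Variables (R : fieldType) (k m : nat).
Implicit Types (H : {ffun 'I_k -> 'I_m} -> R) (x : 'I_k -> 'cV[R]_m).

Lemma eq_hform H1 H2 x : (forall i, H1 i = H2 i) -> hform H1 x = hform H2 x.
Proof. by move=> eqH; apply: eq_bigr => i _; rewrite eqH. Qed.

Lemma hform_sum (I : finType) (P : pred I) (F : I -> {ffun 'I_k -> 'I_m} -> R) x :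
  hform (fun i => \sum_(e | P e) F e i) x = \sum_(e | P e) hform (F e) x.
Proof. by rewrite /hform exchange_big; apply: eq_bigr => i _; rewrite mulr_suml. Qed.

Lemma hformB H1 H2 x :
  hform (fun i => H1 i - H2 i) x = hform H1 x - hform H2 x.
Proof. by rewrite /hform -sumrB; apply: eq_bigr => i _; rewrite mulrBl. Qed.

Lemma hformZ a H x : hform (fun i => a * H i) x = a * hform H x.
Proof. by rewrite /hform mulr_sumr; apply: eq_bigr => i _; rewrite mulrA. Qed.

Lemma hform_prod (w : 'I_k -> 'I_m -> R) x :
  hform (fun i => \prod_j w j (i j)) x = \prod_j \sum_s w j s * x j s 0.
Proof. by rewrite bigA_distr_bigA; apply: eq_bigr => i _; rewrite big_split. Qed.

Lemma natr_forall (I : finType) (b : pred I) :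
  ([forall i, b i]%:R : R) = \prod_i (b i)%:R.
Proof.
have [/forallP bT|/forallPn[j nbj]] := boolP [forall i, b i].
  by rewrite big1 // => i _; rewrite bT.
by rewrite (bigD1 j) //= (negbTE nbj) mul0r.
Qed.

Lemma id_hyper_sum (i : {ffun 'I_k -> 'I_m}) : (0 < k)%N ->
  @id_hyper R k m i = \sum_r \prod_j (i j == r)%:R.
Proof.
move=> k0; pose j0 := Ordinal k0; under eq_bigr do rewrite -natr_forall.
have allE : [forall j, forall j', i j == i j'] = [forall j, i j == i j0].
  apply/forallP/forallP => eqi j; first exact: (forallP (eqi j) j0).
  by apply/forallP => j'; rewrite (eqP (eqi j)) (eqP (eqi j')).
rewrite /id_hyper allE (bigD1 (i j0)) //= big1 ?addr0 // => r ne.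
by rewrite (_ : [forall j, _] = false) //; apply: contraNF ne => /forallP/(_ j0)/eqP->.
Qed.

Lemma hform_id_hyper x : (0 < k)%N ->
  hform (@id_hyper R k m) x = \sum_r \prod_j x j r 0.
Proof.
move=> k0; rewrite (eq_hform _ (fun i => id_hyper_sum i k0)) hform_sum.
apply: eq_bigr => r _; rewrite (hform_prod (fun _ s => (s == r)%:R)).
apply: eq_bigr => j _.
rewrite (bigD1 r) //= eqxx mul1r big1 ?addr0 // => s /negbTE->.
by rewrite mul0r.
Qed.

End Hyperforms.

Lemma avec'_dot_Hn (R : fieldType) n (E : {set {set 'I_n}}) e (c : 'cV[R]_n) :
  Hn c -> ((avec' R E e)^T *m c) 0 0 = \sum_x (x \in Defs.compA E e)%:R * c x 0.
Proof.
move=> c0; rewrite !mxE; under eq_bigr do rewrite !mxE mulr1 mulrBl.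
by rewrite sumrB -mulr_sumr c0 mulr0 subr0.
Qed.

Lemma sum_compl_Hn (R : fieldType) n (b : pred 'I_n) (c : 'cV[R]_n) :
  Hn c -> \sum_x (~~ b x)%:R * c x 0 = - \sum_x (b x)%:R * c x 0.
Proof.
move=> c0; have nb (a : bool) : ((~~ a)%:R : R) = 1 - a%:R by case: a; rewrite ?subrr ?subr0.
by under eq_bigr do rewrite nb mulrBl mul1r; rewrite sumrB c0 sub0r.
Qed.

Lemma PT_mulmx (R : fieldType) n (E : {set {set 'I_n}}) (c : 'cV[R]_n) r :
  (PT R E *m c) r 0 = ((avec' R E (enum_val r))^T *m c) 0 0.
Proof. by rewrite !mxE; apply: eq_bigr => x _; rewrite !mxE. Qed.

Section SteinerForm.
Variables (R : fieldType) (n k : nat) (E : {set {set 'I_n}}).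

Lemma natr_separates_image (i : 'I_k -> 'I_n) e : (0 < k)%N ->
  ((separates E [set i j | j : 'I_k] e)%:R : R)
    = 1 - \prod_j (i j \in Defs.compA E e)%:R - \prod_j (i j \notin Defs.compA E e)%:R.
Proof.
move=> k0; pose j0 := Ordinal k0; rewrite -!natr_forall.
set A := Defs.compA E e.
have image_exists (P : pred 'I_n) :
    [exists x in [set i j | j : 'I_k], P x] = [exists j, P (i j)].
  apply/exists_inP/existsP => [[_ /imsetP[j _ ->]]|[j Pj]]; first by exists j.
  by exists (i j); rewrite ?imset_f.
have in_exists : [exists j, i j \in A] = ~~ [forall j, i j \notin A].
  by rewrite negb_forall; apply: eq_existsb => j; rewrite negbK.
rewrite /separates !image_exists in_exists -negb_forall.
have : ~~ ([forall j, i j \in A] && [forall j, i j \notin A]).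
  apply/nandP; case: (boolP (i j0 \in A)) => j0A; [right|left];
    by apply/forallPn; exists j0; rewrite ?negbK.
by case: [forall j, _ \in A]; case: [forall j, _ \notin A] => //= _;
  rewrite ?subr0 ?subrr ?sub0r.
Qed.

Hypothesis treeE : is_tree E.

Lemma hform_steiner_tree (c : 'I_k -> 'cV[R]_n) : (0 < k)%N ->
  hform (@steiner_hyper R n k E) c = \sum_(e in E)
    (\prod_j \sum_x c j x 0
     - \prod_j \sum_x (x \in Defs.compA E e)%:R * c j x 0
     - \prod_j \sum_x (x \notin Defs.compA E e)%:R * c j x 0).
Proof.
move=> k0; pose j0 := Ordinal k0.
rewrite (eq_hform (H2 := fun i => \sum_(e in E)
   ((\prod_(j < k) 1) - \prod_j (i j \in Defs.compA E e)%:R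
                     - \prod_j (i j \notin Defs.compA E e)%:R)) _) => [|i].
  rewrite hform_sum; apply: eq_bigr => e _; rewrite !hformB.
  rewrite (hform_prod (fun _ _ => 1)) (hform_prod (fun _ s => (s \in Defs.compA E e)%:R)).
  rewrite (hform_prod (fun _ s => (s \notin Defs.compA E e)%:R)).
  by congr (_ - _ - _); apply: eq_bigr => j _; apply: eq_bigr => x _; rewrite mul1r.
rewrite /steiner_hyper (@steiner_tree _ _ _ (i j0) treeE); last exact: imset_f.
rewrite -sum1_card natr_sum big_mkcond [RHS]big_mkcond; apply: eq_bigr => e _.
rewrite inE; case: (e \in E) => //=.
by rewrite big1 // -natr_separates_image //; case: separates.
Qed.

Lemma hform_steiner_tree_Hn (c : 'I_k -> 'cV[R]_n) :
  (0 < k)%N -> ~~ odd k -> (forall j, Hn (c j)) ->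
  hform (@steiner_hyper R n k E) c
    = -2 * \sum_(e in E) \prod_j ((avec' R E e)^T *m c j) 0 0.
Proof.
move=> k0 k_even c0; rewrite hform_steiner_tree // mulr_sumr.
apply: eq_bigr => e _; rewrite (bigD1 (Ordinal k0)) //= c0 mul0r.
under [X in _ - _ - X]eq_bigr do rewrite sum_compl_Hn //.
rewrite prodrN card_ord -signr_odd (negbTE k_even) expr0 mul1r.
under [in RHS]eq_bigr do rewrite avec'_dot_Hn //.
by rewrite big_mkcond /=; ring.
Qed.

End SteinerForm.

Theorem mainTheorem6 (R : realFieldType) (n k : nat) (E : {set {set 'I_n}})
    (c : 'I_k -> 'cV[R]_n) :
  (2 <= n)%N -> is_tree E -> (2 <= k)%N -> ~~ odd k ->
  (forall j, Hn (c j)) ->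
  hform (@steiner_hyper R n k E) c
    = hform (fun i => -2 * @id_hyper R k #|E| i) (fun j => PT R E *m c j)
  /\ hform (@steiner_hyper R n k E) c
    = -2 * \sum_(e in E) \prod_(j < k) ((avec' R E e)^T *m c j) 0 0.
Proof.
move=> _ treeE k2 k_even c0; have k0 : (0 < k)%N := ltnW k2.
have steinerE := hform_steiner_tree_Hn treeE k0 k_even c0.
split=> //; rewrite steinerE hformZ hform_id_hyper // big_enum_val.
by congr (_ * _); apply: eq_bigr => r _; apply: eq_bigr => j _; rewrite PT_mulmx.
Qed.
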